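(* If a topological space $X$ has a $\mathfrak{G}$-base at a point $x\in X$, then $X$ has a countable $cs^{\ast}$-network at $x$ (i.e. $X$ has countable $cs^{\ast}$-character at $x$). *)

From Stdlib Require Import Arith.

Set Implicit Arguments.

Record topological_space := TopSpace {
  carrier :> Type;
  is_open : (carrier -> Prop) -> Prop;
  open_full : is_open (fun _ => True);
  open_inter : forall U V, is_open U -> is_open V -> is_open (fun z => U z /\ V z);
  open_union : forall (F : (carrier -> Prop) -> Prop),
      (forall U, F U -> is_open U) -> is_open (fun z => exists U, F U /\ U z)
}.

Definition neighborhood {X : topological_space} (x : X) (N : X -> Prop) : Prop :=
  exists U, is_open X U /\ U x /\ (forall z, U z -> N z).

Definition converges {X : topological_space} (s : nat -> X) (x : X) : Prop :=
  forall O, neighborhood x O -> exists m, forall n, m <= n -> O (s n).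

Definition baire_le (a b : nat -> nat) : Prop := forall i, a i <= b i.

Definition G_base_at {X : topological_space} (x : X) (U : (nat -> nat) -> X -> Prop) : Prop :=
  (forall a, neighborhood x (U a)) /\
  (forall O, neighborhood x O -> exists a, forall z, U a z -> O z) /\
  (forall a b, baire_le a b -> forall z, U b z -> U a z).

Definition cs_star_network_at {X : topological_space} (x : X) (Nw : (X -> Prop) -> Prop) : Prop :=
  forall (s : nat -> X) (O : X -> Prop), converges s x -> neighborhood x O ->
    exists N, Nw N /\ N x /\ (forall z, N z -> O z) /\
      (forall m, exists n, m <= n /\ N (s n)).

Definition countable_cs_star_network_at {X : topological_space} (x : X) : Prop :=
  exists F : nat -> (X -> Prop), cs_star_network_at x (fun N => exists k, N = F k).

(* Write [D_k(a)] for the intersection of all [U_b] with [b] agreeing with [a]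
   on its first [k] values.  [D_k(a)] depends only on a finite prefix of [a],
   so these sets form a countable family, and [D_k(a) ⊆ U_a].  It is a
   cs*-network: if no [D_k(a)] contained infinitely many terms of a sequence
   [s -> x], pick for every [k] a term [s (n_k)], [n_k >= k], outside some
   [U_(b_k)] with [b_k] agreeing with [a] below [k].  A single [g] dominates
   all the [b_k] (they agree with [a] below the diagonal), so by monotonicity
   [U_g ⊆ U_(b_k)] misses infinitely many terms of [s], contradicting
   [s -> x]. *)

From Stdlib Require Import Arith Lia Classical ClassicalEpsilon Cantor.

Definition agree (k : nat) (a b : nat -> nat) : Prop :=
  forall i, i < k -> a i = b i.

Definition frequently (P : nat -> Prop) : Prop :=
  forall m, exists n, m <= n /\ P n.

Fixpoint decode_seq (c i : nat) : nat :=
  let (h, t) := Cantor.of_nat c in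
  match i with
  | 0 => h
  | S i => decode_seq t i
  end.

Lemma decode_seq_cons h t i :
  decode_seq (Cantor.to_nat (h, t)) i = match i with 0 => h | S i => decode_seq t i end.
Proof. destruct i; cbn -[Cantor.of_nat Cantor.to_nat]; rewrite Cantor.cancel_of_to; reflexivity. Qed.

Lemma decode_seq_prefix_surj k (a : nat -> nat) :
  exists c, agree k (decode_seq c) a.
Proof.
  revert a; induction k as [|k IHk]; intros a.
  - exists 0; intros i Hi; lia.
  - destruct (IHk (fun i => a (S i))) as [c Hc].
    exists (Cantor.to_nat (a 0, c)); intros [|i] Hi; rewrite decode_seq_cons.
    + reflexivity.
    + apply Hc; lia.
Qed.

Fixpoint max_upto (f : nat -> nat) (j : nat) : nat :=
  match j with
  | 0 => f 0
  | S j => Nat.max (max_upto f j) (f (S j))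
  end.

Lemma le_max_upto f j k : k <= j -> f k <= max_upto f j.
Proof.
  induction j as [|j IHj]; intros Hk; simpl.
  - replace k with 0 by lia; lia.
  - destruct (Nat.eq_dec k (S j)) as [->|Hne]; [lia|].
    specialize (IHj ltac:(lia)); lia.
Qed.

Lemma baire_dominate_diagonal (a : nat -> nat) (b : nat -> nat -> nat) :
  (forall k, agree k (b k) a) -> exists g, forall k, baire_le (b k) g.
Proof.
  intros Hb; exists (fun i => Nat.max (a i) (max_upto (fun k => b k i) i)); intros k i.
  destruct (Nat.lt_ge_cases i k) as [Hik|Hki].
  - rewrite (Hb k i Hik); lia.
  - pose proof (le_max_upto (fun k => b k i) i k Hki); simpl in *; lia.
Qed.

Section GBase.

Context {X : topological_space} {x : X} (U : (nat -> nat) -> X -> Prop).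
Hypothesis HU : G_base_at x U.

Definition prefix_meet (k : nat) (a : nat -> nat) (z : X) : Prop :=
  forall b, agree k b a -> U b z.

Lemma prefix_meet_agree k a a' z :
  agree k a a' -> prefix_meet k a z -> prefix_meet k a' z.
Proof.
  intros Haa' Hz b Hb; apply Hz; intros i Hi; rewrite Hb, Haa' by exact Hi; reflexivity.
Qed.

Lemma prefix_meet_sub k a z : prefix_meet k a z -> U a z.
Proof. intros Hz; apply Hz; intros i _; reflexivity. Qed.

Lemma prefix_meet_point k a : prefix_meet k a x.
Proof.
  intros b _; destruct HU as [Hnbhd _].
  destruct (Hnbhd b) as [V [_ [HVx HVU]]]; auto.
Qed.

Lemma not_frequently_prefix_meet (s : nat -> X) k a :
  ~ frequently (fun n => prefix_meet k a (s n)) ->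
  exists p : nat * (nat -> nat), k <= fst p /\ agree k (snd p) a /\ ~ U (snd p) (s (fst p)).
Proof.
  intros Hnf; apply not_all_ex_not in Hnf as [m Hm].
  assert (Hout : ~ prefix_meet k a (s (Nat.max m k))).
  { intros Hin; apply Hm; exists (Nat.max m k); split; [lia | exact Hin]. }
  apply not_all_ex_not in Hout as [b Hb]; apply imply_to_and in Hb as [Hba HbU].
  exists (Nat.max m k, b); simpl; repeat split; [lia | exact Hba | exact HbU].
Qed.

Lemma converges_frequently_prefix_meet (s : nat -> X) a :
  converges s x -> exists k, frequently (fun n => prefix_meet k a (s n)).
Proof.
  intros Hs; apply NNPP; intros Hnone.
  assert (Hesc : forall k, exists p : nat * (nat -> nat),
             k <= fst p /\ agree k (snd p) a /\ ~ U (snd p) (s (fst p))).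
  { intros k; apply not_frequently_prefix_meet; intros Hk; apply Hnone; exists k; exact Hk. }
  destruct (choice _ Hesc) as [p Hp].
  destruct (baire_dominate_diagonal a (fun k => snd (p k))) as [g Hg].
  { intros k; apply (Hp k). }
  destruct HU as [Hnbhd [_ Hmono]].
  destruct (Hs (U g) (Hnbhd g)) as [M HM].
  destruct (Hp M) as [HMn [_ HnotU]].
  exact (HnotU (Hmono _ _ (Hg M) _ (HM _ HMn))).
Qed.

End GBase.

Theorem proposition4p7 (X : topological_space) (x : X) :
  (exists U : (nat -> nat) -> X -> Prop, G_base_at x U) ->
  countable_cs_star_network_at x.
Proof.
  intros [U HU].
  exists (fun c => prefix_meet U (fst (Cantor.of_nat c)) (decode_seq (snd (Cantor.of_nat c)))).
  intros s O Hs HO.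
  destruct (proj1 (proj2 HU) O HO) as [a HaO].
  destruct (converges_frequently_prefix_meet U HU s a Hs) as [k Hk].
  destruct (decode_seq_prefix_surj k a) as [c Hc].
  assert (Hca : agree k a (decode_seq c)) by (intros i Hi; symmetry; auto).
  exists (prefix_meet U k (decode_seq c)); repeat split.
  - exists (Cantor.to_nat (k, c)); rewrite Cantor.cancel_of_to; reflexivity.
  - exact (prefix_meet_point U HU k (decode_seq c)).
  - intros z Hz; apply HaO, (prefix_meet_sub U k a z).
    apply (prefix_meet_agree U k (decode_seq c)); [exact Hc | exact Hz].
  - intros m; destruct (Hk m) as [n [Hmn Hn]].
    exists n; split; [exact Hmn | exact (prefix_meet_agree U k a _ _ Hca Hn)].
Qed.
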